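(* Let $n\geq 3$ be a multiple of $3$. Then $\gamma_{sR}(C_3\vee C_n)=1$.
   Context: $C_n$ denotes the cycle on $n$ vertices. For a graph $G=(V,E)$ and $x\in V$, $N_G[x]=\{x\}\cup\{y: xy\in E\}$. A signed Roman dominating function (SRDF) on $G$ is a function $f:V\to\{-1,1,2\}$ such that (a) $\sum_{y\in N_G[x]}f(y)\geq 1$ for every $x\in V$, and (b) every vertex $x$ with $f(x)=-1$ is adjacent to at least one vertex $y$ with $f(y)=2$. The weight of $f$ is $\sum_{x\in V}f(x)$, and $\gamma_{sR}(G)$ is the minimum weight of an SRDF on $G$. The join $G_1\vee G_2$ of two graphs has vertex set $V(G_1)\cup V(G_2)$ (disjoint union) and edge set $E(G_1)\cup E(G_2)\cup\{uv: u\in V(G_1), v\in V(G_2)\}$. *)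

From mathcomp Require Import all_boot all_order all_algebra.
Set Implicit Arguments. Unset Strict Implicit. Unset Printing Implicit Defensive.
Import Order.TTheory GRing.Theory Num.Theory.
Local Open Scope ring_scope.

Record graph := Graph {
  vert : finType;
  adj : rel vert;
  adj_sym : symmetric adj;
  adj_irr : irreflexive adj }.

Definition closed_nbhd (G : graph) (x : vert G) : {set vert G} :=
  [set y | (y == x) || adj x y].

Definition cycle_adj (n : nat) : rel 'I_n :=
  fun i j => (i != j) && ((j == (i.+1 %% n)%N :> nat) || (i == (j.+1 %% n)%N :> nat)).

Lemma cycle_adj_sym n : symmetric (@cycle_adj n).
Proof. by move=> i j; rewrite /cycle_adj eq_sym orbC. Qed.

Lemma cycle_adj_irr n : irreflexive (@cycle_adj n).
Proof. by move=> i; rewrite /cycle_adj eqxx. Qed.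

Definition Cycle (n : nat) : graph := Graph (@cycle_adj_sym n) (@cycle_adj_irr n).

Definition join_adj (G1 G2 : graph) : rel (vert G1 + vert G2) :=
  fun u v => match u, v with
  | inl a, inl b => adj a b
  | inr a, inr b => adj a b
  | _, _ => true
  end.

Lemma join_adj_sym G1 G2 : symmetric (@join_adj G1 G2).
Proof. by case=> a [] b //=; apply: adj_sym. Qed.

Lemma join_adj_irr G1 G2 : irreflexive (@join_adj G1 G2).
Proof. by case=> a /=; apply: adj_irr. Qed.

Definition join (G1 G2 : graph) : graph :=
  Graph (@join_adj_sym G1 G2) (@join_adj_irr G1 G2).

Definition is_SRDF (G : graph) (f : vert G -> int) : Prop :=
  (forall x, f x \in [:: -1; 1; 2]) /\
  (forall x, 1 <= \sum_(y in closed_nbhd x) f y) /\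
  (forall x, f x = -1 -> exists y, adj x y /\ f y = 2).

Definition weight (G : graph) (f : vert G -> int) : int := \sum_(x : vert G) f x.

Definition gamma_sR_is (G : graph) (k : int) : Prop :=
  (exists f : vert G -> int, is_SRDF f /\ weight f = k) /\
  (forall f : vert G -> int, is_SRDF f -> k <= weight f).

From mathcomp Require Import all_boot all_order all_algebra.
From mathcomp Require Import zify.
Set Implicit Arguments. Unset Strict Implicit. Unset Printing Implicit Defensive.
Import GRing.Theory.
Local Open Scope ring_scope.

(* A vertex of C_3 is adjacent to every other vertex of C_3 \/ C_n, so its
   closed neighbourhood is the whole graph and condition (a) at it already
   forces weight >= 1.  Weight 1 is attained by -1, 1, 1 on C_3 and the
   pattern 2, -1, -1, 2, -1, -1, ... on C_n: as 3 | n, the pattern is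
   consistent around the cycle, so it sums to 0 on C_n and on every closed
   neighbourhood of C_n, and every -1 has a neighbour labelled 2. *)

Section Universal.

Variables (G : graph) (x : vert G).
Hypothesis x_universal : closed_nbhd x = [set: vert G].

Lemma sum_closed_nbhd_universal (f : vert G -> int) :
  \sum_(y in closed_nbhd x) f y = weight f.
Proof. by rewrite x_universal (eq_bigl xpredT) // => y; rewrite inE. Qed.

Lemma SRDF_weight_ge1_of_universal (f : vert G -> int) : is_SRDF f -> 1 <= weight f.
Proof. by move=> [_ [sum_ge1 _]]; rewrite -sum_closed_nbhd_universal. Qed.

End Universal.

Section Join.

Variables G1 G2 : graph.

Definition join_fun (f1 : vert G1 -> int) (f2 : vert G2 -> int) :
    vert (join G1 G2) -> int :=
  fun u => match u with inl a => f1 a | inr b => f2 b end.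

Lemma weight_join_fun f1 f2 : weight (join_fun f1 f2) = weight f1 + weight f2.
Proof. by rewrite /weight big_sumType. Qed.

Lemma closed_nbhd_join_inl (a : vert G1) :
  closed_nbhd a = [set: vert G1] ->
  closed_nbhd (inl a : vert (join G1 G2)) = [set: vert (join G1 G2)].
Proof.
move=> Na; apply/setP => -[b|b]; rewrite !inE //=.
by have := in_setT b; rewrite -Na inE.
Qed.

Lemma sum_closed_nbhd_join_inr f1 f2 (b : vert G2) :
  \sum_(y in closed_nbhd (inr b : vert (join G1 G2))) join_fun f1 f2 y =
  weight f1 + \sum_(c in closed_nbhd b) f2 c.
Proof.
rewrite big_sumType /=; congr (_ + _); first by apply: eq_bigl => a; rewrite inE.
by apply: eq_bigl => c; rewrite !inE.
Qed.

End Join.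

Section Cycle.

Variable n : nat.

Lemma cycle_adjE (i j : 'I_n) :
  cycle_adj i j = (i != j) && ((j == ordS i) || (j == ord_pred i)).
Proof.
rewrite /cycle_adj -[(j == _ :> nat)]/(j == ordS i) -[(i == _ :> nat)]/(i == ordS j).
by rewrite -[i in i == ordS j]ord_predK (can_eq (@ordSK n)) [ord_pred i == j]eq_sym.
Qed.

Lemma closed_nbhd_cycle (i : 'I_n) :
  closed_nbhd (i : vert (Cycle n)) = [set i; ordS i; ord_pred i].
Proof.
apply/setP => j; rewrite !inE /= cycle_adjE.
by case: eqVneq => [->|]; rewrite ?eqxx //= => ->.
Qed.

Lemma val_ordS (i : 'I_n) : val (ordS i) = (if i.+1 == n then 0 else i.+1)%N.
Proof.
rewrite /=; case: eqVneq => [->|ne]; first exact: modnn.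
by rewrite modn_small // ltn_neqAle ne /=.
Qed.

Lemma val_ord_pred (i : 'I_n) :
  val (ord_pred i) = (if i == 0 :> nat then n.-1 else i.-1)%N.
Proof.
have lt_in := ltn_ord i.
rewrite /=; case: eqVneq => [i0|ne].
  by rewrite i0 add0n modn_small //; lia.
have -> : ((i + n).-1 = i.-1 + n)%N by lia.
by rewrite modnDr modn_small //; lia.
Qed.

Hypothesis n_ge3 : (3 <= n)%N.

Lemma ordS_neq (i : 'I_n) : i != ordS i.
Proof. by have := ltn_ord i; rewrite -val_eqE val_ordS; case: ifP => /= *; lia. Qed.

Lemma ord_pred_neq (i : 'I_n) : i != ord_pred i.
Proof. by have := ltn_ord i; rewrite -val_eqE val_ord_pred; case: ifP => /= *; lia. Qed.

Lemma ordS_neq_ord_pred (i : 'I_n) : ordS i != ord_pred i.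
Proof.
have := ltn_ord i.
by rewrite -val_eqE val_ordS val_ord_pred; case: ifP; case: ifP => /= *; lia.
Qed.

Lemma cycle_adj_ordS (i : 'I_n) : cycle_adj i (ordS i).
Proof. by rewrite cycle_adjE ordS_neq eqxx. Qed.

Lemma cycle_adj_ord_pred (i : 'I_n) : cycle_adj i (ord_pred i).
Proof. by rewrite cycle_adjE ord_pred_neq eqxx orbT. Qed.

Lemma sum_closed_nbhd_cycle (f : 'I_n -> int) (i : 'I_n) :
  \sum_(j in closed_nbhd (i : vert (Cycle n))) f j = f i + f (ordS i) + f (ord_pred i).
Proof.
rewrite closed_nbhd_cycle -setUA !big_setU1 ?big_set1 /=.
- by rewrite addrA.
- by rewrite inE ordS_neq_ord_pred.
- by rewrite !inE negb_or ordS_neq ord_pred_neq.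
Qed.

End Cycle.

Lemma closed_nbhd_cycle3 (a : 'I_3) : closed_nbhd (a : vert (Cycle 3)) = [set: 'I_3].
Proof.
apply/setP => b; rewrite !inE /= /cycle_adj.
by case: a b => [[|[|[|?]]] ?] [[|[|[|?]]] ?].
Qed.

Definition mod3_label (m : nat) : int := if (m %% 3 == 0)%N then 2 else -1.

Lemma mod3_label_window (m : nat) : mod3_label m + mod3_label m.+1 + mod3_label m.+2 = 0.
Proof.
by rewrite /mod3_label; do 3 case: ifP; move=> *; lia.
Qed.

Lemma sum_mod3_label (k : nat) : \sum_(j < 3 * k) mod3_label j = 0.
Proof.
rewrite -(big_mkord xpredT); elim: k => [|k IHk]; first by rewrite big_geq.
rewrite mulnSr !addnS addn0 !big_nat_recr //= IHk add0r.
exact: mod3_label_window.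
Qed.

Section Mod3Labelling.

Variable n : nat.
Hypotheses (n_ge3 : (3 <= n)%N) (dvd3n : (3 %| n)%N).

Lemma mod3_label_ordS (i : 'I_n) : mod3_label (ordS i) = mod3_label i.+1.
Proof. by rewrite /mod3_label /= modn_dvdm. Qed.

Lemma mod3_label_ord_pred (i : 'I_n) : mod3_label (ord_pred i) = mod3_label i.+2.
Proof.
rewrite /mod3_label /= modn_dvdm //.
have lt_in := ltn_ord i; have [k n_eq] := dvdnP dvd3n.
by congr (if _ then _ else _); lia.
Qed.

Lemma sum_closed_nbhd_mod3_label (i : 'I_n) :
  \sum_(j in closed_nbhd (i : vert (Cycle n))) mod3_label j = 0.
Proof.
rewrite (sum_closed_nbhd_cycle n_ge3).
by rewrite -(mod3_label_window i) -(mod3_label_ordS i) -(mod3_label_ord_pred i).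
Qed.

Lemma weight_mod3_label : weight (G := Cycle n) (fun j => mod3_label j) = 0.
Proof. by move: dvd3n => /dvdnP[k ->]; rewrite mulnC; apply: sum_mod3_label. Qed.

Lemma mod3_label_neg_adj2 (i : 'I_n) : mod3_label i = -1 ->
  exists j, cycle_adj i j /\ mod3_label j = 2.
Proof.
move=> i_neg; have i_mod3 : (i %% 3 != 0)%N.
  by move: i_neg; rewrite /mod3_label; case: eqP.
case: (eqVneq (i %% 3) 2)%N => [i_eq2|i_ne2].
- exists (ordS i); split; first exact: cycle_adj_ordS.
  by rewrite mod3_label_ordS /mod3_label; case: ifP => // *; lia.
- exists (ord_pred i); split; first exact: cycle_adj_ord_pred.
  by rewrite mod3_label_ord_pred /mod3_label; case: ifP => // *; lia.
Qed.

End Mod3Labelling.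

Definition C3_label (a : 'I_3) : int := if a == ord0 then -1 else 1.

Definition srdf_C3_Cn (n : nat) : vert (join (Cycle 3) (Cycle n)) -> int :=
  @join_fun (Cycle 3) (Cycle n) C3_label (fun j : 'I_n => mod3_label j).

Lemma weight_C3_label : weight (G := Cycle 3) C3_label = 1.
Proof. by rewrite /weight !big_ord_recl big_ord0. Qed.

Section SRDF_C3_Cn.

Variable n : nat.
Hypotheses (n_ge3 : (3 <= n)%N) (dvd3n : (3 %| n)%N).

Lemma weight_srdf_C3_Cn : weight (@srdf_C3_Cn n) = 1.
Proof. by rewrite weight_join_fun weight_C3_label weight_mod3_label ?addr0. Qed.

Lemma srdf_C3_Cn_SRDF : is_SRDF (@srdf_C3_Cn n).
Proof.
split; [|split].
- by case=> [a|j] /=; rewrite /C3_label /mod3_label; case: ifP.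
- case=> [a|i].
    rewrite sum_closed_nbhd_universal ?weight_srdf_C3_Cn //.
    exact/closed_nbhd_join_inl/closed_nbhd_cycle3.
  rewrite sum_closed_nbhd_join_inr (sum_closed_nbhd_mod3_label n_ge3 dvd3n).
  by rewrite weight_C3_label addr0.
- case=> [a|i] /=.
    have n_gt0 : (0 < n)%N by apply: leq_trans n_ge3.
    by exists (inr (Ordinal n_gt0)).
  by move=> /mod3_label_neg_adj2[] // j; exists (inr j).
Qed.

End SRDF_C3_Cn.

Theorem mainTheorem4 (n : nat) : (3 <= n)%N -> (3 %| n)%N ->
  gamma_sR_is (join (Cycle 3) (Cycle n)) 1.
Proof.
move=> n_ge3 dvd3n; split.
  by exists (@srdf_C3_Cn n); split; [apply: srdf_C3_Cn_SRDF | apply: weight_srdf_C3_Cn].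
have C3_universal : closed_nbhd (inl ord0 : vert (join (Cycle 3) (Cycle n))) = setT.
  exact/closed_nbhd_join_inl/closed_nbhd_cycle3.
exact: SRDF_weight_ge1_of_universal C3_universal.
Qed.
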